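(* Let $V\in\mathcal{V}$ and $\epsilon,c,c_1,c_2\in(0,\mathcal{L}_V(0))$. (1) $\mathcal{L}_V(\tau_V(c))\ge c/(1+c)$, and for all $s>0$, \[\mathcal{L}_V(\tau_V(c)+s)\le c+\frac{\tau_V(c)+s}{s\,e^{s\lambda_V(c)}}.\] (2) $\mathcal{L}_V(T_V(\epsilon))=\epsilon$, and for all $r\ge0$, $s>0$ and $c_1<c_2$, \[\mathcal{L}_V(T_V(\epsilon)+r+s)\le c_1+c_2e^{-(T_V(\epsilon)+r+s)\lambda_V(c_1)}+\frac{\epsilon\,(T_V(\epsilon)+r+s)}{(T_V(\epsilon)+s)e^{r\lambda_V(c_2)}}.\]
   Context: $\mathcal{V}$ is the class of non-decreasing right-continuous $V:(0,\infty)\to\mathbb{R}$ with $\lim_{\lambda\to0^+}V(\lambda)=0$, $\lim_{\lambda\to\infty}V(\lambda)<\infty$; $\mathcal{L}_V(t)=\int_{(0,\infty)}e^{-t\lambda}dV(\lambda)$ for $t\ge0$. $T_V(\epsilon)=\min\{t\ge0:\mathcal{L}_V(t)\le\epsilon\}$. For $c\in(0,\mathcal{L}_V(0))$: $\lambda_V(c)=\inf\{\lambda:V(\lambda)>c\}$, $\tau_V(c)=\sup_{\lambda\ge\lambda_V(c)}\lambda^{-1}\log(1+V(\lambda))$. *)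

From Stdlib Require Import Reals Lra ClassicalEpsilon.
Open Scope R_scope.

(* Limit of a real sequence (well defined when the sequence converges). *)
Definition Lim (u : nat -> R) : R :=
  epsilon (inhabits 0) (fun l => Un_cv u l).

(* Infimum / supremum of a set of reals (well defined when they exist). *)
Definition is_inf (E : R -> Prop) (m : R) : Prop :=
  (forall x, E x -> m <= x) /\ (forall m', (forall x, E x -> m' <= x) -> m' <= m).
Definition is_sup (E : R -> Prop) (m : R) : Prop :=
  (forall x, E x -> x <= m) /\ (forall m', (forall x, E x -> x <= m') -> m <= m').
Definition Inf (E : R -> Prop) : R := epsilon (inhabits 0) (fun m => is_inf E m).
Definition Sup (E : R -> Prop) : R := epsilon (inhabits 0) (fun m => is_sup E m).

(* The class \mathcal{V}: V : (0,oo) -> R (values outside (0,oo) irrelevant). *)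
Definition in_classV (V : R -> R) : Prop :=
  (forall x y, 0 < x -> x <= y -> V x <= V y) /\
  (forall x, 0 < x -> forall e, 0 < e -> exists d, 0 < d /\
      forall y, x <= y < x + d -> Rabs (V y - V x) < e) /\
  (forall e, 0 < e -> exists d, 0 < d /\ forall y, 0 < y < d -> Rabs (V y) < e) /\
  (exists l, forall e, 0 < e -> exists M, forall y, M < y -> Rabs (V y - l) < e).

(* Riemann-Stieltjes sum of f against V on [a,b], uniform partition into n+1 pieces. *)
Definition RS_sum (f V : R -> R) (a b : R) (n : nat) : R :=
  let h := (b - a) / INR (S n) in
  sum_f_R0 (fun k => f (a + INR (S k) * h) *
                     (V (a + INR (S k) * h) - V (a + INR k * h))) n.

(* Stieltjes integral of a continuous f over (a,b] w.r.t. right-continuous monotone V. *)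
Definition RS_int (f V : R -> R) (a b : R) : R :=
  Lim (fun n => RS_sum f V a b n).

(* Laplace-Stieltjes transform  L_V(t) = \int_{(0,oo)} e^{-t lambda} dV(lambda),
   as the limit of the integrals over (1/(n+1), n+1]. *)
Definition LV (V : R -> R) (t : R) : R :=
  Lim (fun n => RS_int (fun x => exp (- t * x)) V (/ INR (S n)) (INR (S n))).

Definition TV (V : R -> R) (eps : R) : R :=
  epsilon (inhabits 0) (fun t => 0 <= t /\ LV V t <= eps /\
     forall t', 0 <= t' -> LV V t' <= eps -> t <= t').

Definition lamV (V : R -> R) (c : R) : R :=
  Inf (fun x => 0 < x /\ c < V x).

Definition tauV (V : R -> R) (c : R) : R :=
  Sup (fun y => exists x, lamV V c <= x /\ 0 < x /\ y = ln (1 + V x) / x).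

From Stdlib Require Import Reals Lra Lia ClassicalEpsilon Classical Arith.
Open Scope R_scope.

(* L_V is computed through uniform Riemann-Stieltjes sums over (1/(n+1), n+1].
   Since the kernel e^{-t lambda} is decreasing and Lipschitz and V is
   non-decreasing, every right-endpoint sum lies below every left-endpoint sum;
   hence the uniform sums converge, every right-endpoint sum bounds the truncated
   integral from below, and pointwise bounds on the integrand pass to L_V.

   Below lambda_V(c) the measure dV has mass at most c, while V(lambda) <=
   e^{tau_V(c) lambda} above it, so summation by parts bounds the contribution of
   [lambda_V(c), oo) to L_V(tau_V(c) + s) by (tau_V(c) + s)/s e^{-s lambda_V(c)}.
   Testing L_V(tau_V(c)) against e^{-tau lambda} V(lambda) at a lambda where
   log(1 + V(lambda))/lambda nearly attains tau_V(c) gives the lower bound c/(1+c).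

   L_V is non-increasing, Lipschitz away from 0, larger than eps near 0 and tends
   to 0, so T_V(eps) exists and L_V(T_V(eps)) = eps. The last bound splits the
   kernel at lambda_V(c1) and lambda_V(c2), comparing the part above lambda_V(c2)
   with e^{-r lambda_V(c2)} L_V(T_V(eps)). *)

Fixpoint sumN (g : nat -> R) (N : nat) : R :=
  match N with O => 0 | S n => sumN g n + g n end.

Lemma sumN_S g N : sumN g (S N) = sumN g N + g N.
Proof. reflexivity. Qed.

Lemma sum_f_R0_sumN g n : sum_f_R0 g n = sumN g (S n).
Proof. induction n as [|n IH]; simpl in *; [lra | rewrite IH; simpl; ring]. Qed.

Lemma sumN_le g1 g2 N :
  (forall k, (k < N)%nat -> g1 k <= g2 k) -> sumN g1 N <= sumN g2 N.
Proof.
  induction N as [|N IH]; simpl; intros H; [lra|].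
  assert (sumN g1 N <= sumN g2 N) by (apply IH; intros; apply H; lia).
  specialize (H N (Nat.lt_succ_diag_r N)). lra.
Qed.

Lemma sumN_ext g1 g2 N :
  (forall k, (k < N)%nat -> g1 k = g2 k) -> sumN g1 N = sumN g2 N.
Proof. intros H; apply Rle_antisym; apply sumN_le; intros k Hk; rewrite H; lra || lia. Qed.

Lemma sumN_plus g1 g2 N : sumN (fun k => g1 k + g2 k) N = sumN g1 N + sumN g2 N.
Proof. induction N as [|N IH]; simpl; [lra | rewrite IH; ring]. Qed.

Lemma sumN_minus g1 g2 N : sumN (fun k => g1 k - g2 k) N = sumN g1 N - sumN g2 N.
Proof. induction N as [|N IH]; simpl; [lra | rewrite IH; ring]. Qed.

Lemma sumN_scal K g N : sumN (fun k => K * g k) N = K * sumN g N.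
Proof. induction N as [|N IH]; simpl; [lra | rewrite IH; ring]. Qed.

Lemma sumN_telescope u N : sumN (fun k => u (S k) - u k) N = u N - u O.
Proof. induction N as [|N IH]; simpl; [lra | rewrite IH; ring]. Qed.

Lemma sumN_shift g N : sumN g (S N) = g O + sumN (fun k => g (S k)) N.
Proof. induction N as [|N IH]; simpl in *; [lra | rewrite IH; ring]. Qed.

Lemma sumN_nonneg g N : (forall k, (k < N)%nat -> 0 <= g k) -> 0 <= sumN g N.
Proof.
  induction N as [|N IH]; simpl; intros H; [lra|].
  assert (0 <= sumN g N) by (apply IH; intros; apply H; lia).
  specialize (H N (Nat.lt_succ_diag_r N)). lra.
Qed.

(** * Riemann-Stieltjes sums *)

Definition increasing_pos (V : R -> R) := forall x y, 0 < x -> x <= y -> V x <= V y.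
Definition decreasing_pos (f : R -> R) := forall x y, 0 < x -> x <= y -> f y <= f x.
Definition nonneg_pos (f : R -> R) := forall x, 0 < x -> 0 <= f x.
Definition increasing_upto (x : nat -> R) N := forall i j, (i <= j <= N)%nat -> x i <= x j.

Lemma increasing_upto_S x N : increasing_upto x (S N) -> increasing_upto x N.
Proof. intros H i j Hij; apply H; lia. Qed.

Definition RS_right f V (x : nat -> R) N :=
  sumN (fun k => f (x (S k)) * (V (x (S k)) - V (x k))) N.
Definition RS_left f V (x : nat -> R) N :=
  sumN (fun k => f (x k) * (V (x (S k)) - V (x k))) N.

(* The left sum against V frozen above the level c. Sweeping c along a second
   partition p turns it into the right sum over p, which compares the two. *)
Definition RS_left_trunc f V (q : nat -> R) M c :=
  sumN (fun j => f (q j) * (V (Rmin (q (S j)) c) - V (Rmin (q j) c))) M.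

Section RiemannStieltjesComparison.

Variables (f V : R -> R) (q : nat -> R) (M : nat) (a d : R).
Hypotheses (HV : increasing_pos V) (Hf : decreasing_pos f) (Hfp : nonneg_pos f)
  (Ha : 0 < a) (Hq0 : q O = a) (HqM : q M = d) (Hq : increasing_upto q M).

Lemma trunc_gap_mono c c' z1 z2 : a <= c' <= c -> a <= z1 <= z2 ->
  V (Rmin z1 c) - V (Rmin z1 c') <= V (Rmin z2 c) - V (Rmin z2 c').
Proof.
  intros Hc Hz.
  assert (Hm : forall x y, a <= x -> x <= y -> V x <= V y) by (intros; apply HV; lra).
  unfold Rmin; repeat destruct Rle_dec; try lra;
    try (assert (V c' <= V z2) by (apply Hm; lra));
    try (assert (V c' <= V c) by (apply Hm; lra));
    try (assert (V z1 <= V z2) by (apply Hm; lra));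
    try (assert (V z1 <= V c) by (apply Hm; lra)); lra.
Qed.

Lemma RS_left_trunc_step c c' : a <= c' -> c' <= c -> c <= d ->
  RS_left_trunc f V q M c' + f c * (V c - V c') <= RS_left_trunc f V q M c.
Proof.
  intros H1 H2 H3.
  set (phi := fun z => V (Rmin z c) - V (Rmin z c')).
  assert (Hr : f c * (V c - V c') = sumN (fun j => f c * (phi (q (S j)) - phi (q j))) M).
  { rewrite sumN_scal, (sumN_telescope (fun j => phi (q j))). unfold phi. rewrite HqM, Hq0.
    unfold Rmin; repeat destruct Rle_dec; try lra;
      try (replace d with c by lra); try (replace c' with c by lra); ring. }
  assert (Hd : RS_left_trunc f V q M c - RS_left_trunc f V q M c' =
               sumN (fun j => f (q j) * (phi (q (S j)) - phi (q j))) M).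
  { unfold RS_left_trunc. rewrite <- sumN_minus. apply sumN_ext. intros; unfold phi; ring. }
  enough (sumN (fun j => f c * (phi (q (S j)) - phi (q j))) M <=
          sumN (fun j => f (q j) * (phi (q (S j)) - phi (q j))) M) by lra.
  apply sumN_le. intros j Hj.
  assert (Hqa : a <= q j) by (rewrite <- Hq0; apply Hq; lia).
  assert (Hqq : q j <= q (S j)) by (apply Hq; lia).
  destruct (Rlt_dec (q j) c).
  - assert (f c <= f (q j)) by (apply Hf; lra).
    assert (phi (q j) <= phi (q (S j))) by (apply trunc_gap_mono; lra).
    nra.
  - assert (Hc : forall z, c <= z -> phi z = V c - V c').
    { intros z Hz. unfold phi, Rmin. repeat destruct Rle_dec; try lra.
      all: replace z with c by lra; try (replace c' with c by lra); ring. }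
    rewrite !Hc by lra. lra.
Qed.

Lemma RS_left_trunc_nonneg c : a <= c -> 0 <= RS_left_trunc f V q M c.
Proof.
  intros Hc. apply sumN_nonneg. intros j Hj.
  assert (Hqa : a <= q j) by (rewrite <- Hq0; apply Hq; lia).
  assert (Hqq : q j <= q (S j)) by (apply Hq; lia).
  apply Rmult_le_pos; [apply Hfp; lra|].
  assert (V (Rmin (q j) c) <= V (Rmin (q (S j)) c)) by (apply HV; unfold Rmin; repeat destruct Rle_dec; lra).
  lra.
Qed.

Lemma RS_right_le_left_trunc N p : p O = a -> increasing_upto p N -> p N <= d ->
  RS_right f V p N <= RS_left_trunc f V q M (p N).
Proof.
  revert p. induction N as [|N IH]; intros p Hp0 Hp HpN; unfold RS_right; simpl.
  - rewrite Hp0. apply RS_left_trunc_nonneg; lra.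
  - fold (RS_right f V p N).
    assert (p N <= p (S N)) by (apply Hp; lia).
    assert (a <= p N) by (rewrite <- Hp0; apply Hp; lia).
    assert (RS_right f V p N <= RS_left_trunc f V q M (p N))
      by (apply IH; auto; [apply increasing_upto_S; auto | lra]).
    pose proof (RS_left_trunc_step (p (S N)) (p N)). lra.
Qed.

Lemma RS_left_trunc_end : RS_left_trunc f V q M d = RS_left f V q M.
Proof.
  apply sumN_ext. intros j Hj.
  assert (q j <= d) by (rewrite <- HqM; apply Hq; lia).
  assert (q (S j) <= d) by (rewrite <- HqM; apply Hq; lia).
  unfold Rmin; repeat destruct Rle_dec; try lra.
Qed.

End RiemannStieltjesComparison.

Lemma RS_right_le_left f V p N q M a b :
  increasing_pos V -> decreasing_pos f -> nonneg_pos f -> 0 < a ->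
  p O = a -> p N = b -> increasing_upto p N -> q O = a -> q M = b -> increasing_upto q M ->
  RS_right f V p N <= RS_left f V q M.
Proof.
  intros HV Hf Hfp Ha Hp0 HpN Hp Hq0 HqM Hq.
  rewrite <- (RS_left_trunc_end f V q M b), <- HpN by auto.
  apply (RS_right_le_left_trunc f V q M a b); auto. lra.
Qed.

Lemma RS_left_le_right f V x N K h :
  increasing_pos V -> 0 < x O -> increasing_upto x N ->
  (forall k, (k < N)%nat -> x (S k) = x k + h) ->
  (forall z, 0 < z -> f z - f (z + h) <= K * h) ->
  RS_left f V x N <= RS_right f V x N + K * h * (V (x N) - V (x O)).
Proof.
  intros HV Hx0 Hx Hs Hf.
  rewrite <- (sumN_telescope (fun k => V (x k))), <- sumN_scal.
  unfold RS_left, RS_right. rewrite <- sumN_plus. apply sumN_le. intros k Hk.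
  assert (x O <= x k) by (apply Hx; lia).
  assert (x k <= x (S k)) by (apply Hx; lia).
  assert (V (x k) <= V (x (S k))) by (apply HV; lra).
  rewrite Hs in * by auto. pose proof (Hf (x k) ltac:(lra)). nra.
Qed.

Definition unif a b n k := a + INR k * ((b - a) / INR (S n)).

Lemma unif_0 a b n : unif a b n O = a.
Proof. unfold unif; simpl; ring. Qed.

Lemma unif_last a b n : unif a b n (S n) = b.
Proof. unfold unif. assert (INR (S n) <> 0) by (apply not_0_INR; lia). field; auto. Qed.

Lemma unif_S a b n k : unif a b n (S k) = unif a b n k + (b - a) / INR (S n).
Proof. unfold unif. rewrite S_INR. ring. Qed.

Lemma unif_step_nonneg a b n : a <= b -> 0 <= (b - a) / INR (S n).
Proof.
  intros. apply Rmult_le_pos; [lra|]. left; apply Rinv_0_lt_compat, lt_0_INR; lia.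
Qed.

Lemma unif_increasing a b n : a <= b -> increasing_upto (unif a b n) (S n).
Proof.
  intros Hab i j Hij. unfold unif. pose proof (unif_step_nonneg a b n Hab).
  assert (INR i <= INR j) by (apply le_INR; lia). nra.
Qed.

Lemma unif_ge a b n k : a <= b -> a <= unif a b n k.
Proof.
  intros. unfold unif. pose proof (unif_step_nonneg a b n H). pose proof (pos_INR k). nra.
Qed.

Lemma RS_sum_unif f V a b n : RS_sum f V a b n = RS_right f V (unif a b n) (S n).
Proof. unfold RS_sum. rewrite sum_f_R0_sumN. reflexivity. Qed.

(** * Convergence of the uniform sums *)

Lemma Lim_eq u l : Un_cv u l -> Lim u = l.
Proof.
  intros H. unfold Lim. apply (UL_sequence u); auto.
  apply (epsilon_spec (inhabits 0) (fun l => Un_cv u l)). exists l; auto.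
Qed.

Lemma INR_S_gt K : exists N, forall n, (N <= n)%nat -> K < INR (S n).
Proof.
  destruct (INR_archimed 1 K) as [N HN]; [lra|]. exists N. intros n Hn.
  assert (INR N <= INR n) by (apply le_INR; auto). rewrite S_INR. lra.
Qed.

Lemma cv_div_INR_S C : Un_cv (fun n => C / INR (S n)) 0.
Proof.
  intros e He. destruct (INR_S_gt (Rabs C / e)) as [N HN]. exists N. intros n Hn.
  specialize (HN n Hn). unfold Rdist. rewrite Rminus_0_r.
  assert (Hp : 0 < INR (S n)) by (apply lt_0_INR; lia).
  unfold Rdiv. rewrite Rabs_mult, Rabs_inv, (Rabs_pos_eq (INR (S n))) by lra.
  apply (Rmult_lt_reg_r (INR (S n))); auto.
  replace (Rabs C * / INR (S n) * INR (S n)) with (Rabs C) by (field; lra).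
  apply (Rmult_lt_compat_r e) in HN; auto.
  replace (Rabs C / e * e) with (Rabs C) in HN by (field; lra). lra.
Qed.

Lemma cv_const K : Un_cv (fun _ => K) K.
Proof. intros e He. exists O. intros. unfold Rdist. rewrite Rminus_diag, Rabs_R0. auto. Qed.

Lemma cv_squeeze0 w C : (forall n, 0 <= w n <= C / INR (S n)) -> Un_cv w 0.
Proof.
  intros H e He. destruct (cv_div_INR_S C e He) as [N HN]. exists N. intros n Hn.
  specialize (HN n Hn). specialize (H n). unfold Rdist in *. rewrite Rminus_0_r in *.
  rewrite Rabs_pos_eq in * by lra. lra.
Qed.

Lemma cv_le_of_le_add u L B w : Un_cv u L -> (forall n, u n <= B + w n) -> Un_cv w 0 -> L <= B.
Proof.
  intros Hu H Hw. replace B with (B + 0) by ring.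
  apply (Rle_cv_lim H Hu). apply CV_plus; auto. apply cv_const.
Qed.

Lemma cv_ge_of_ge_add u L B w : Un_cv u L -> (forall n, B <= u n + w n) -> Un_cv w 0 -> B <= L.
Proof.
  intros Hu H Hw. replace L with (L + 0) by ring.
  apply (Rle_cv_lim H); [apply cv_const | apply CV_plus; auto].
Qed.

(* The uniform right sums are squeezed between the left sums, which dominate every
   right sum; the Lipschitz bound on f makes the gap O(1/n). *)
Lemma RS_int_spec f V a b K :
  increasing_pos V -> decreasing_pos f -> nonneg_pos f -> 0 <= K ->
  (forall z h, 0 < z -> 0 <= h -> f z - f (z + h) <= K * h) -> 0 < a <= b ->
  Un_cv (RS_sum f V a b) (RS_int f V a b) /\
  (forall p N, p O = a -> p N = b -> increasing_upto p N -> RS_right f V p N <= RS_int f V a b).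
Proof.
  intros HV Hf Hfp HK Hfl [Ha Hab].
  set (L := RS_sum f V a b).
  set (U := fun m => RS_left f V (unif a b m) (S m)).
  set (C := K * (b - a) * (V b - V a)).
  assert (HVab : V a <= V b) by (apply HV; lra).
  assert (HC : 0 <= C) by (unfold C; apply Rmult_le_pos; [apply Rmult_le_pos|]; lra).
  assert (HLU : forall p N m, p O = a -> p N = b -> increasing_upto p N -> RS_right f V p N <= U m).
  { intros p N m H0 H1 H2. apply (RS_right_le_left f V p N _ _ a b); auto.
    apply unif_0. apply unif_last. apply unif_increasing; lra. }
  assert (HLL : forall m k, L m <= U k).
  { intros m k. unfold L. rewrite RS_sum_unif.
    apply HLU; [apply unif_0 | apply unif_last | apply unif_increasing; lra]. }
  assert (Hgap : forall m, U m <= L m + C / INR (S m)).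
  { intros m. unfold U, L. rewrite RS_sum_unif.
    replace (C / INR (S m)) with (K * ((b - a) / INR (S m)) * (V b - V a)) by (unfold C, Rdiv; ring).
    pose proof (RS_left_le_right f V (unif a b m) (S m) K ((b - a) / INR (S m)) HV) as G.
    rewrite unif_last, unif_0 in G. apply G.
    - lra.
    - apply unif_increasing; lra.
    - intros; apply unif_S.
    - intros; apply Hfl; auto. apply unif_step_nonneg; lra. }
  assert (Hc : Cauchy_crit L).
  { intros e He. destruct (cv_div_INR_S C e He) as [N HN]. exists N. intros n m Hn Hm.
    pose proof (HN n Hn) as Hn'. pose proof (HN m Hm) as Hm'. unfold Rdist in *.
    rewrite Rminus_0_r in *.
    assert (0 <= C / INR (S n)) by (apply Rmult_le_pos; auto; left; apply Rinv_0_lt_compat, lt_0_INR; lia).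
    assert (0 <= C / INR (S m)) by (apply Rmult_le_pos; auto; left; apply Rinv_0_lt_compat, lt_0_INR; lia).
    rewrite Rabs_pos_eq in Hn', Hm' by lra.
    pose proof (HLL n m). pose proof (HLL m n). pose proof (Hgap n). pose proof (Hgap m).
    apply Rabs_def1; lra. }
  destruct (R_complete L Hc) as [l Hl].
  replace (RS_int f V a b) with l by (symmetry; apply Lim_eq; auto). split; auto.
  intros p N H0 H1 H2. apply (cv_ge_of_ge_add L l (RS_right f V p N) (fun m => C / INR (S m))); auto.
  - intros m. pose proof (HLU p N m H0 H1 H2). pose proof (Hgap m). lra.
  - apply cv_div_INR_S.
Qed.

Lemma RS_right_mono f1 f2 V x N : increasing_pos V -> 0 < x O -> increasing_upto x N ->
  (forall k, (k < N)%nat -> f1 (x (S k)) <= f2 (x (S k))) -> RS_right f1 V x N <= RS_right f2 V x N.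
Proof.
  intros HV Hx0 Hx H. apply sumN_le. intros k Hk.
  assert (x O <= x k) by (apply Hx; lia). assert (x k <= x (S k)) by (apply Hx; lia).
  assert (V (x k) <= V (x (S k))) by (apply HV; lra). specialize (H k Hk). nra.
Qed.

Lemma RS_right_plus f1 f2 V x N :
  RS_right (fun z => f1 z + f2 z) V x N = RS_right f1 V x N + RS_right f2 V x N.
Proof. unfold RS_right. rewrite <- sumN_plus. apply sumN_ext; intros; ring. Qed.

Lemma RS_right_scal K f V x N : RS_right (fun z => K * f z) V x N = K * RS_right f V x N.
Proof. unfold RS_right. rewrite <- sumN_scal. apply sumN_ext; intros; ring. Qed.

Lemma RS_right_one V x N : RS_right (fun _ => 1) V x N = V (x N) - V (x O).
Proof. unfold RS_right. rewrite <- (sumN_telescope (fun k => V (x k))). apply sumN_ext; intros; ring. Qed.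

Lemma RS_right_nonneg f V x N : increasing_pos V -> 0 < x O -> increasing_upto x N ->
  nonneg_pos f -> 0 <= RS_right f V x N.
Proof.
  intros HV Hx0 Hx Hf. apply sumN_nonneg. intros k Hk.
  assert (x O <= x k) by (apply Hx; lia). assert (x k <= x (S k)) by (apply Hx; lia).
  assert (V (x k) <= V (x (S k))) by (apply HV; lra). specialize (Hf (x (S k)) ltac:(lra)). nra.
Qed.

Definition ind_lt p z := if Rlt_dec z p then 1 else 0.

Lemma ind_lt_01 p z : 0 <= ind_lt p z <= 1.
Proof. unfold ind_lt; destruct Rlt_dec; lra. Qed.

Lemma RS_right_ind_lt V x N p C : increasing_pos V -> nonneg_pos V -> 0 < x O -> increasing_upto x N ->
  (forall z, 0 < z < p -> V z <= C) -> 0 <= C -> RS_right (ind_lt p) V x N <= C.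
Proof.
  intros HV Hnn Hx0 Hx HC HC0.
  assert (Hgen : forall N, increasing_upto x N -> RS_right (ind_lt p) V x N <=
     (if Rlt_dec (x N) p then V (x N) - V (x O) else Rmax 0 (C - V (x O)))).
  { clear N Hx. induction N as [|N IH]; intros Hx; unfold RS_right; simpl.
    - destruct Rlt_dec; [lra | apply Rmax_l].
    - fold (RS_right (ind_lt p) V x N).
      specialize (IH (increasing_upto_S _ _ Hx)).
      assert (x O <= x N) by (apply Hx; lia). assert (x N <= x (S N)) by (apply Hx; lia).
      unfold ind_lt at 2. destruct (Rlt_dec (x (S N)) p), (Rlt_dec (x N) p) in IH; try lra.
      assert (V (x N) <= C) by (apply HC; lra). pose proof (Rmax_r 0 (C - V (x O))). lra. }
  specialize (Hgen N Hx). pose proof (Hnn _ Hx0). assert (x O <= x N) by (apply Hx; lia).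
  destruct Rlt_dec in Hgen.
  - assert (V (x N) <= C) by (apply HC; lra). lra.
  - unfold Rmax in Hgen; destruct Rle_dec in Hgen; lra.
Qed.

(* Summation by parts, restricted to the points at or above p. *)
Lemma RS_right_abel f V x N p : 0 < x O -> increasing_upto x N -> nonneg_pos f -> nonneg_pos V ->
  RS_right (fun z => (1 - ind_lt p z) * f z) V x N <=
  (1 - ind_lt p (x N)) * f (x N) * V (x N) +
  sumN (fun k => (1 - ind_lt p (x k)) * V (x k) * (f (x k) - f (x (S k)))) N.
Proof.
  intros Hx0 Hx Hf Hnn. induction N as [|N IH]; unfold RS_right in *; simpl.
  - pose proof (Hf _ Hx0). pose proof (Hnn _ Hx0). pose proof (ind_lt_01 p (x O)).
    assert (0 <= (1 - ind_lt p (x O)) * f (x O)) by nra. nra.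
  - specialize (IH (increasing_upto_S _ _ Hx)).
    assert (x O <= x N) by (apply Hx; lia). assert (x N <= x (S N)) by (apply Hx; lia).
    pose proof (Hf (x N) ltac:(lra)). pose proof (Hf (x (S N)) ltac:(lra)).
    pose proof (Hnn (x N) ltac:(lra)). pose proof (Hnn (x (S N)) ltac:(lra)).
    unfold ind_lt in *. destruct (Rlt_dec (x (S N)) p), (Rlt_dec (x N) p); try lra; nra.
Qed.

Lemma sumN_ind_lt_telescope g x N p : 0 < p -> 0 < x O -> increasing_upto x N -> decreasing_pos g ->
  sumN (fun k => (1 - ind_lt p (x k)) * (g (x k) - g (x (S k)))) N <= g p - g (Rmax p (x N)).
Proof.
  intros Hp Hx0 Hx Hg. induction N as [|N IH]; simpl.
  - assert (g (Rmax p (x O)) <= g p) by (apply Hg; auto; apply Rmax_l). lra.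
  - specialize (IH (increasing_upto_S _ _ Hx)).
    assert (x O <= x N) by (apply Hx; lia). assert (x N <= x (S N)) by (apply Hx; lia).
    unfold ind_lt at 2. destruct (Rlt_dec (x N) p).
    + rewrite Rmax_left in IH by lra.
      assert (g (Rmax p (x (S N))) <= g p) by (apply Hg; auto; apply Rmax_l). lra.
    + rewrite Rmax_right in IH by lra. rewrite Rmax_right by lra. lra.
Qed.

Definition widen (a' b' : R) (p : nat -> R) N k :=
  match k with O => a' | S k' => if le_lt_dec k' N then p k' else b' end.

Lemma RS_right_widen f V a' b' p N :
  RS_right f V (widen a' b' p N) (S (S N)) =
  f (p O) * (V (p O) - V a') + RS_right f V p N + f b' * (V b' - V (p N)).
Proof.
  unfold RS_right. rewrite sumN_S, sumN_shift.
  rewrite (sumN_ext _ (fun k => f (p (S k)) * (V (p (S k)) - V (p k)))).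
  - unfold widen. destruct (le_lt_dec O N), (le_lt_dec (S N) N), (le_lt_dec N N); try lia. ring.
  - intros k Hk. unfold widen. destruct (le_lt_dec (S k) N), (le_lt_dec k N); try lia. reflexivity.
Qed.

Lemma widen_increasing a' b' p N : increasing_upto p N -> a' <= p O -> p N <= b' ->
  increasing_upto (widen a' b' p N) (S (S N)).
Proof.
  intros Hp H0 H1 [|i] [|j] Hij; unfold widen; try lra; try lia.
  - destruct le_lt_dec.
    + assert (p O <= p j) by (apply Hp; lia). lra.
    + assert (p O <= p N) by (apply Hp; lia). lra.
  - destruct (le_lt_dec i N), (le_lt_dec j N); try lia; try lra.
    + apply Hp; lia.
    + assert (p i <= p N) by (apply Hp; lia). lra.
Qed.

(** * The Laplace kernel *)

Lemma exp_le x y : x <= y -> exp x <= exp y.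
Proof. intros [H|H]; [left; apply exp_increasing; auto | subst; lra]. Qed.

Lemma ln_le x y : 0 < x -> x <= y -> ln x <= ln y.
Proof. intros Hx [H|H]; [left; apply ln_increasing; auto | subst; lra]. Qed.

Lemma exp_neg_le_inv x : 0 < x -> exp (- x) <= / x.
Proof.
  intros Hx. pose proof (exp_ineq1_le x). pose proof (exp_pos (- x)).
  assert (exp (- x) * exp x = 1) by (rewrite <- exp_plus, <- exp_0; f_equal; ring).
  apply (Rmult_le_reg_l x); auto. rewrite Rinv_r by lra. nra.
Qed.

Definition kern t x := exp (- t * x).

Lemma kern_pos t x : 0 < kern t x.
Proof. apply exp_pos. Qed.

Lemma kern_decreasing t : 0 <= t -> decreasing_pos (kern t).
Proof. intros Ht x y Hx Hxy. apply exp_le. nra. Qed.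

Lemma kern_le_1 t z : 0 <= t -> 0 <= z -> kern t z <= 1.
Proof. intros. unfold kern. rewrite <- exp_0. apply exp_le. nra. Qed.

Lemma kern_lipschitz t z h : 0 <= t -> 0 <= z -> 0 <= h -> kern t z - kern t (z + h) <= t * h.
Proof.
  intros Ht Hz Hh. unfold kern.
  replace (- t * (z + h)) with (- t * z + - (t * h)) by ring. rewrite exp_plus.
  pose proof (kern_le_1 t z Ht Hz). pose proof (kern_pos t z). unfold kern in *.
  pose proof (exp_ineq1_le (- (t * h))).
  assert (exp (- (t * h)) <= 1) by (rewrite <- exp_0; apply exp_le; nra). nra.
Qed.

Lemma kern_shift_le t t' z : 0 < t -> t <= t' -> 0 <= z -> kern t z <= kern t' z + (t' - t) / t.
Proof.
  intros Ht Htt Hz. unfold kern.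
  replace (- t' * z) with (- t * z + - ((t' - t) * z)) by ring. rewrite exp_plus.
  pose proof (exp_ineq1_le (- ((t' - t) * z))). pose proof (exp_pos (- t * z)).
  assert (Hw : exp (- t * z) * (t * z) <= 1).
  { destruct (Rle_lt_or_eq_dec 0 (t * z)) as [Hp|Hp]; [nra| |nra].
    pose proof (exp_neg_le_inv (t * z) Hp).
    replace (- t * z) with (- (t * z)) by ring.
    apply Rmult_le_compat_r with (r := t * z) in H1; [|lra].
    rewrite Rinv_l in H1 by lra. lra. }
  assert (exp (- t * z) * ((t' - t) * z) <= (t' - t) / t).
  { unfold Rdiv. apply (Rmult_le_reg_l t); auto.
    replace (t * (exp (- t * z) * ((t' - t) * z))) with ((t' - t) * (exp (- t * z) * (t * z))) by ring.
    replace (t * ((t' - t) * / t)) with ((t' - t) * 1) by (field; lra). nra. }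
  nra.
Qed.

(* Below l1 the mass of dV is at most c1, between l1 and l2 it is at most c2 and
   damped by e^{-u l1}; above l2 one compares with the kernel at time T. *)
Lemma kern_split_le u T l1 l2 z : 0 <= T <= u -> 0 <= l1 -> 0 <= l2 -> 0 < z ->
  kern u z <= ind_lt l1 z + exp (- u * l1) * ind_lt l2 z + exp (- (u - T) * l2) * kern T z.
Proof.
  intros HT H1 H2 Hz.
  pose proof (ind_lt_01 l1 z). pose proof (ind_lt_01 l2 z). pose proof (kern_pos T z).
  pose proof (exp_pos (- u * l1)). pose proof (exp_pos (- (u - T) * l2)).
  pose proof (kern_le_1 u z ltac:(lra) ltac:(lra)).
  unfold ind_lt at 1; destruct (Rlt_dec z l1); [nra|].
  unfold ind_lt, kern in *; destruct (Rlt_dec z l2).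
  - assert (exp (- u * z) <= exp (- u * l1)) by (apply exp_le; nra). nra.
  - replace (- u * z) with (- (u - T) * z + - T * z) by ring. rewrite exp_plus.
    assert (exp (- (u - T) * z) <= exp (- (u - T) * l2)) by (apply exp_le; nra).
    pose proof (exp_pos (- (u - T) * z)). nra.
Qed.

(* One step of the summation by parts at a point z where V(z) <= e^{tau z}. *)
Lemma kern_increment_le tau s z h v : 0 <= tau -> 0 < s -> 0 <= z -> 0 <= h ->
  0 <= v <= exp (tau * z) ->
  v * (kern (tau + s) z - kern (tau + s) (z + h)) <=
  (tau + s) / s * (1 + s * h) * (kern s z - kern s (z + h)).
Proof.
  intros Htau Hs Hz Hh Hv. set (u := tau + s). unfold kern.
  replace (- u * (z + h)) with (- u * z + - (u * h)) by ring.
  replace (- s * (z + h)) with (- s * z + - (s * h)) by ring.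
  rewrite !exp_plus.
  assert (E : exp (tau * z) * exp (- u * z) = exp (- s * z)) by (rewrite <- exp_plus; f_equal; unfold u; ring).
  pose proof (exp_ineq1_le (- (u * h))). pose proof (exp_ineq1_le (s * h)).
  assert (E2 : exp (- (s * h)) * exp (s * h) = 1) by (rewrite <- exp_plus, <- exp_0; f_equal; ring).
  assert (exp (- (u * h)) <= 1) by (rewrite <- exp_0; apply exp_le; unfold u; nra).
  pose proof (exp_pos (- (s * h))). pose proof (exp_pos (s * h)). pose proof (exp_pos (- u * z)).
  pose proof (exp_pos (- s * z)).
  assert (K1 : (1 + s * h) * exp (- (s * h)) <= 1) by nra.
  assert (K2 : u * h <= u / s * (1 + s * h) * (1 - exp (- (s * h)))).
  { replace (u * h) with (u / s * (s * h)) by (field; lra).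
    rewrite Rmult_assoc. apply Rmult_le_compat_l; [|nra].
    apply Rmult_le_pos; [unfold u; lra | left; apply Rinv_0_lt_compat; lra]. }
  assert (K3 : v * (exp (- u * z) - exp (- u * z) * exp (- (u * h))) <=
               exp (tau * z) * exp (- u * z) * (1 - exp (- (u * h)))).
  { assert (0 <= exp (- u * z) * (1 - exp (- (u * h)))) by nra. nra. }
  rewrite E in K3. nra.
Qed.

Lemma kern_mass_ge tau h x v c : 0 < x -> 0 <= c <= v -> (tau - h) * x <= ln (1 + v) ->
  c / (1 + c) * exp (- h * x) <= kern tau x * v.
Proof.
  intros Hx Hc Hln. unfold kern.
  assert (Hw : exp (- h * x) <= exp (- tau * x) * (1 + v)).
  { rewrite <- (exp_ln (1 + v)) by lra. rewrite <- exp_plus. apply exp_le. lra. }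
  assert (Hq : c / (1 + c) <= v / (1 + v)).
  { apply (Rmult_le_reg_r ((1 + c) * (1 + v))); [nra|].
    replace (c / (1 + c) * ((1 + c) * (1 + v))) with (c * (1 + v)) by (field; lra).
    replace (v / (1 + v) * ((1 + c) * (1 + v))) with (v * (1 + c)) by (field; lra). nra. }
  replace (exp (- tau * x) * v) with (exp (- tau * x) * (1 + v) * (v / (1 + v))) by (field; lra).
  pose proof (exp_pos (- h * x)).
  assert (0 <= c / (1 + c)) by (apply Rmult_le_pos; [lra | left; apply Rinv_0_lt_compat; lra]).
  rewrite Rmult_comm. apply Rmult_le_compat; lra.
Qed.

(* Abel summation: the part of dV above p, where V(z) <= e^{tau z}, contributes
   at most (tau+s)/s e^{-s p} to the integral of e^{-(tau+s) z}, up to the boundary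
   term at the right end and an error of order of the mesh h. *)
Lemma RS_right_tail_le V l c p tau s x N h :
  increasing_pos V -> nonneg_pos V -> (forall z, 0 < z -> V z <= l) ->
  0 < p -> 0 <= c -> 0 <= tau -> 0 < s -> 0 <= h ->
  (forall z, 0 < z < p -> V z <= c) -> (forall z, p <= z -> V z <= exp (tau * z)) ->
  0 < x O -> increasing_upto x N -> (forall k, x (S k) = x k + h) ->
  RS_right (kern (tau + s)) V x N <=
  c + kern (tau + s) (x N) * l + (tau + s) / s * (1 + s * h) * exp (- s * p).
Proof.
  intros HV Hnn Hl Hp Hc Htau Hs Hh Hbelow Habove Hx0 Hx Hxs.
  set (u := tau + s). set (R' := u / s * (1 + s * h)).
  assert (Hxp : forall k, (k <= N)%nat -> 0 < x k) by (intros k Hk; pose proof (Hx O k ltac:(lia)); lra).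
  assert (HR' : 0 <= R') by (unfold R', u; apply Rmult_le_pos;
    [apply Rmult_le_pos; [lra | left; apply Rinv_0_lt_compat; lra] | nra]).
  apply Rle_trans with (RS_right (fun z => ind_lt p z + (1 - ind_lt p z) * kern u z) V x N).
  { apply RS_right_mono; auto. intros k Hk.
    pose proof (kern_le_1 u (x (S k)) ltac:(unfold u; lra) ltac:(pose proof (Hxp (S k) Hk); lra)).
    unfold ind_lt; destruct Rlt_dec; lra. }
  rewrite RS_right_plus.
  pose proof (RS_right_ind_lt V x N p c HV Hnn Hx0 Hx Hbelow Hc).
  pose proof (RS_right_abel (kern u) V x N p Hx0 Hx (fun z _ => Rlt_le _ _ (kern_pos u z)) Hnn).
  assert (HB : sumN (fun k => (1 - ind_lt p (x k)) * V (x k) * (kern u (x k) - kern u (x (S k)))) N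
               <= R' * exp (- s * p)).
  { apply Rle_trans with (sumN (fun k => R' * ((1 - ind_lt p (x k)) * (kern s (x k) - kern s (x (S k))))) N).
    - apply sumN_le. intros k Hk. unfold ind_lt. destruct Rlt_dec; [lra|].
      rewrite Rminus_0_r, !Rmult_1_l, Hxs. pose proof (Hxp k ltac:(lia)).
      apply kern_increment_le; auto; try lra. split; [apply Hnn; lra | apply Habove; lra].
    - rewrite sumN_scal. apply Rmult_le_compat_l; auto.
      pose proof (sumN_ind_lt_telescope (kern s) x N p Hp Hx0 Hx (kern_decreasing s ltac:(lra))).
      pose proof (kern_pos s (Rmax p (x N))). unfold kern in *. lra. }
  assert (HT : (1 - ind_lt p (x N)) * kern u (x N) * V (x N) <= kern u (x N) * l).
  { pose proof (ind_lt_01 p (x N)). pose proof (Hl (x N) (Hxp N (le_n N))).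
    pose proof (Hnn (x N) (Hxp N (le_n N))). pose proof (kern_pos u (x N)).
    assert (0 <= kern u (x N) * V (x N)) by nra. nra. }
  unfold R', u in *. lra.
Qed.

(** * Infima, suprema and first crossing times *)

Lemma le_of_le_sub_eps A B : (forall e, 0 < e -> A - e <= B) -> A <= B.
Proof. intros H. destruct (Rle_dec A B); auto. specialize (H ((A - B) / 2)). lra. Qed.

Lemma Inf_spec E : (exists x, E x) -> (exists b, forall x, E x -> b <= x) -> is_inf E (Inf E).
Proof.
  intros Hne Hb. unfold Inf. apply (epsilon_spec (inhabits 0) (fun m => is_inf E m)).
  destruct (completeness (fun x => E (- x))) as [s [Hs1 Hs2]].
  - destruct Hb as [b Hb]. exists (- b). intros x Hx. specialize (Hb _ Hx). lra.
  - destruct Hne as [x Hx]. exists (- x). rewrite Ropp_involutive. auto.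
  - exists (- s). split.
    + intros x Hx. assert (- x <= s) by (apply Hs1; rewrite Ropp_involutive; auto). lra.
    + intros m' Hm'. assert (s <= - m') by (apply Hs2; intros x Hx; specialize (Hm' _ Hx); lra). lra.
Qed.

Lemma Sup_spec E : (exists x, E x) -> (exists b, forall x, E x -> x <= b) -> is_sup E (Sup E).
Proof.
  intros Hne Hb. unfold Sup. apply (epsilon_spec (inhabits 0) (fun m => is_sup E m)).
  destruct (completeness E) as [s Hs]; eauto.
Qed.

Lemma is_inf_approx E m e : is_inf E m -> 0 < e -> exists x, E x /\ x < m + e.
Proof.
  intros [H1 H2] He. apply NNPP. intros Hn.
  assert (m + e <= m); [|lra].
  apply H2. intros x Hx. destruct (Rlt_dec x (m + e)); [exfalso; eauto | lra].
Qed.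

Lemma is_sup_approx E m e : is_sup E m -> 0 < e -> exists x, E x /\ m - e < x.
Proof.
  intros [H1 H2] He. apply NNPP. intros Hn.
  assert (m <= m - e); [|lra].
  apply H2. intros x Hx. destruct (Rlt_dec (m - e) x); [exfalso; eauto | lra].
Qed.

(* The infimum of the sublevel set lies in it by right-continuity, and g equals eps
   there by left-continuity, since g > eps just before it. *)
Lemma first_crossing g eps d K : 0 < d -> 0 <= K ->
  (forall t, 0 <= t <= d -> eps < g t) -> (exists t, 0 <= t /\ g t <= eps) ->
  (forall t t', d <= t <= t' -> g t' <= g t <= g t' + K * (t' - t)) ->
  exists T, 0 <= T /\ g T = eps /\ forall t, 0 <= t -> g t <= eps -> T <= t.
Proof.
  intros Hd HK Hsmall [t1 Ht1] Hlip.
  set (E := fun t => 0 <= t /\ g t <= eps).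
  assert (Hi : is_inf E (Inf E)) by (apply Inf_spec; [exists t1; auto | exists 0; intros x []; auto]).
  set (T := Inf E) in *.
  assert (HE : forall t, E t -> d < t).
  { intros t [Ht Hgt]. destruct (Rle_dec t d); [specialize (Hsmall t ltac:(lra)); lra | lra]. }
  assert (HdT : d <= T) by (apply (proj2 Hi); intros x Hx; specialize (HE x Hx); lra).
  assert (Hle : g T <= eps).
  { apply le_of_le_sub_eps. intros e He.
    destruct (is_inf_approx E T (e / (K + 1)) Hi ltac:(apply Rdiv_lt_0_compat; lra))
      as [t [[Ht Hgt] HtT]].
    assert (T <= t) by (apply (proj1 Hi); split; auto).
    specialize (Hlip T t ltac:(lra)).
    assert (K * (t - T) <= e).
    { apply Rle_trans with ((K + 1) * (e / (K + 1))); [nra | right; field; lra]. }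
    lra. }
  assert (HdT' : d < T) by (destruct (Req_dec T d) as [->|]; [specialize (Hsmall d ltac:(lra)); lra | lra]).
  exists T. split; [lra|]. split; [|intros t Ht Hgt; apply (proj1 Hi); split; auto].
  apply Rle_antisym; auto. apply le_of_le_sub_eps. intros e He.
  set (h := Rmin ((T - d) / 2) (e / (K + 1))).
  assert (Hh : 0 < h /\ h <= (T - d) / 2 /\ h <= e / (K + 1)).
  { unfold h, Rmin. assert (0 < e / (K + 1)) by (apply Rdiv_lt_0_compat; lra).
    destruct Rle_dec; lra. }
  assert (Hgt : eps < g (T - h)).
  { destruct (Rlt_dec eps (g (T - h))) as [|Hn]; auto.
    assert (T <= T - h) by (apply (proj1 Hi); split; lra). lra. }
  specialize (Hlip (T - h) T ltac:(lra)).
  assert (K * (T - (T - h)) <= e).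
  { apply Rle_trans with ((K + 1) * (e / (K + 1))); [nra | right; field; lra]. }
  lra.
Qed.

(** * The Laplace-Stieltjes transform *)

Definition lo n := / INR (S n).
Definition hi n := INR (S n).

Lemma lo_hi n : 0 < lo n <= hi n.
Proof.
  unfold lo, hi. assert (1 <= INR (S n)) by (rewrite S_INR; pose proof (pos_INR n); lra).
  split; [apply Rinv_0_lt_compat; lra|].
  apply Rle_trans with 1; [|lra]. rewrite <- Rinv_1. apply Rinv_le_contravar; lra.
Qed.

Lemma unif_lo_hi n m : 0 < unif (lo n) (hi n) m O /\ increasing_upto (unif (lo n) (hi n) m) (S m) /\
  unif (lo n) (hi n) m O = lo n /\ unif (lo n) (hi n) m (S m) = hi n /\
  (forall k, lo n <= unif (lo n) (hi n) m k).
Proof.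
  pose proof (lo_hi n). rewrite unif_0, unif_last.
  repeat split; try lra; [apply unif_increasing; lra | intros; apply unif_ge; lra].
Qed.

(* [LV V t] unfolds to [Lim (LV_trunc V t)]. *)
Definition LV_trunc V t n := RS_int (kern t) V (lo n) (hi n).

Lemma LV_trunc_spec V t n : increasing_pos V -> 0 <= t ->
  Un_cv (RS_sum (kern t) V (lo n) (hi n)) (LV_trunc V t n) /\
  (forall p N, p O = lo n -> p N = hi n -> increasing_upto p N ->
     RS_right (kern t) V p N <= LV_trunc V t n).
Proof.
  intros HV Ht. apply (RS_int_spec (kern t) V (lo n) (hi n) t HV (kern_decreasing t Ht)); auto.
  - intros x _. left; apply kern_pos.
  - intros; apply kern_lipschitz; lra.
  - apply lo_hi.
Qed.

Section LaplaceStieltjes.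

Variables (V : R -> R) (l : R).
Hypotheses (HV : increasing_pos V) (Hnn : nonneg_pos V) (Hl : forall z, 0 < z -> V z <= l)
  (HV0 : forall e, 0 < e -> exists d, 0 < d /\ forall y, 0 < y < d -> V y < e)
  (Hrc : forall x, 0 < x -> forall e, 0 < e -> exists d, 0 < d /\ forall y, x <= y < x + d -> V y < V x + e)
  (Hsup : forall c, c < l -> exists y, 0 < y /\ c < V y).

Lemma LV_trunc_mono t n : 0 <= t -> LV_trunc V t n <= LV_trunc V t (S n).
Proof.
  intros Ht. destruct (LV_trunc_spec V t n HV Ht) as [Hc _].
  destruct (LV_trunc_spec V t (S n) HV Ht) as [_ Hp].
  apply (cv_le_of_le_add _ _ _ (fun _ => 0) Hc); [|apply cv_const].
  intros m. rewrite Rplus_0_r, RS_sum_unif.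
  destruct (unif_lo_hi n m) as [P0 [P1 [P2 [P3 _]]]].
  pose proof (lo_hi n). pose proof (lo_hi (S n)).
  assert (lo (S n) <= lo n) by (apply Rinv_le_contravar; [apply lt_0_INR | apply le_INR]; lia).
  assert (hi n <= hi (S n)) by (apply le_INR; lia).
  set (x := unif (lo n) (hi n) m) in *.
  apply Rle_trans with (RS_right (kern t) V (widen (lo (S n)) (hi (S n)) x (S m)) (S (S (S m)))).
  - rewrite RS_right_widen, P2, P3.
    assert (V (lo (S n)) <= V (lo n)) by (apply HV; lra).
    assert (V (hi n) <= V (hi (S n))) by (apply HV; lra).
    pose proof (kern_pos t (lo n)). pose proof (kern_pos t (hi (S n))). nra.
  - apply Hp; [reflexivity | |].
    + unfold widen. destruct (le_lt_dec (S (S m)) (S m)); [lia | reflexivity].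
    + apply widen_increasing; auto; lra.
Qed.

Lemma LV_trunc_bounds t n : 0 <= t -> 0 <= LV_trunc V t n <= l.
Proof.
  intros Ht. destruct (LV_trunc_spec V t n HV Ht) as [Hc _].
  pose proof (lo_hi n) as [A1 A2]. split.
  - apply (cv_ge_of_ge_add _ _ _ (fun _ => 0) Hc); [|apply cv_const].
    intros m. rewrite Rplus_0_r, RS_sum_unif. destruct (unif_lo_hi n m) as [P0 [P1 _]].
    apply RS_right_nonneg; auto. intros z _. left; apply kern_pos.
  - apply (cv_le_of_le_add _ _ _ (fun _ => 0) Hc); [|apply cv_const].
    intros m. rewrite Rplus_0_r, RS_sum_unif. destruct (unif_lo_hi n m) as [P0 [P1 [P2 [P3 P4]]]].
    apply Rle_trans with (RS_right (fun _ => 1) V (unif (lo n) (hi n) m) (S m)).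
    + apply RS_right_mono; auto. intros k _. apply kern_le_1; auto. pose proof (P4 (S k)); lra.
    + rewrite RS_right_one, P2, P3. pose proof (Hl (hi n) ltac:(lra)). pose proof (Hnn (lo n) A1). lra.
Qed.

Lemma LV_spec t : 0 <= t ->
  Un_cv (LV_trunc V t) (LV V t) /\ (forall n, LV_trunc V t n <= LV V t) /\ 0 <= LV V t <= l.
Proof.
  intros Ht.
  assert (Hg : Un_growing (LV_trunc V t)) by (intros n; apply LV_trunc_mono; auto).
  destruct (growing_cv (LV_trunc V t) Hg) as [L HL].
  { exists l. intros x [n ->]. apply (LV_trunc_bounds t n); auto. }
  replace (LV V t) with L by (symmetry; apply Lim_eq; auto).
  split; auto. split; [intros n; apply growing_ineq; auto|].
  split.
  - apply (cv_ge_of_ge_add _ _ _ (fun _ => 0) HL); [|apply cv_const].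
    intros n. pose proof (LV_trunc_bounds t n Ht). lra.
  - apply (cv_le_of_le_add _ _ _ (fun _ => 0) HL); [|apply cv_const].
    intros n. pose proof (LV_trunc_bounds t n Ht). lra.
Qed.

Lemma LV_le_of_RS_bound t B w z : 0 <= t -> Un_cv w 0 -> (forall n, Un_cv (z n) 0) ->
  (forall n m, RS_sum (kern t) V (lo n) (hi n) m <= B + w n + z n m) -> LV V t <= B.
Proof.
  intros Ht Hw Hz H. destruct (LV_spec t Ht) as [HC _].
  apply (cv_le_of_le_add _ _ _ w HC); auto. intros n.
  destruct (LV_trunc_spec V t n HV Ht) as [Hn _].
  apply (cv_le_of_le_add _ _ _ (z n) Hn); auto.
Qed.

Lemma LV_le_of_RS_le t t' B K : 0 <= t -> 0 <= t' ->
  (forall n m, RS_sum (kern t) V (lo n) (hi n) m <= B + K * RS_sum (kern t') V (lo n) (hi n) m) ->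
  LV V t <= B + K * LV V t'.
Proof.
  intros Ht Ht' H.
  assert (Hn : forall n, LV_trunc V t n <= B + K * LV_trunc V t' n).
  { intros n. apply (Rle_cv_lim (H n)); [apply LV_trunc_spec; auto|].
    apply CV_plus; [apply cv_const | apply CV_mult; [apply cv_const | apply LV_trunc_spec; auto]]. }
  apply (Rle_cv_lim Hn); [apply LV_spec; auto|].
  apply CV_plus; [apply cv_const | apply CV_mult; [apply cv_const | apply LV_spec; auto]].
Qed.

Lemma LV_antitone t t' : 0 <= t <= t' -> LV V t' <= LV V t.
Proof.
  intros Ht. rewrite <- (Rplus_0_l (LV V t)), <- (Rmult_1_l (LV V t)).
  apply LV_le_of_RS_le; try lra. intros n m. rewrite Rplus_0_l, Rmult_1_l, !RS_sum_unif.
  destruct (unif_lo_hi n m) as [P0 [P1 [_ [_ P4]]]].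
  apply RS_right_mono; auto. intros k _. pose proof (lo_hi n). pose proof (P4 (S k)).
  unfold kern. apply exp_le. nra.
Qed.

Lemma LV_lipschitz t t' : 0 < t <= t' -> LV V t <= LV V t' + (t' - t) / t * l.
Proof.
  intros Ht. rewrite Rplus_comm, <- (Rmult_1_l (LV V t')).
  apply LV_le_of_RS_le; try lra. intros n m. rewrite !RS_sum_unif.
  destruct (unif_lo_hi n m) as [P0 [P1 [P2 [P3 P4]]]]. pose proof (lo_hi n).
  apply Rle_trans with (RS_right (fun z => (t' - t) / t * 1 + 1 * kern t' z) V (unif (lo n) (hi n) m) (S m)).
  - apply RS_right_mono; auto. intros k _. pose proof (P4 (S k)).
    pose proof (kern_shift_le t t' (unif (lo n) (hi n) m (S k))). lra.
  - rewrite RS_right_plus, !RS_right_scal, RS_right_one, P2, P3.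
    assert (0 <= (t' - t) / t) by (apply Rmult_le_pos; [lra | left; apply Rinv_0_lt_compat; lra]).
    pose proof (Hl (hi n) ltac:(lra)). pose proof (Hnn (lo n) ltac:(lra)). nra.
Qed.

Lemma LV_split_le u T l1 l2 c1 c2 : 0 <= T <= u -> 0 <= l1 -> 0 <= l2 -> 0 <= c1 -> 0 <= c2 ->
  (forall z, 0 < z < l1 -> V z <= c1) -> (forall z, 0 < z < l2 -> V z <= c2) ->
  LV V u <= c1 + exp (- u * l1) * c2 + exp (- (u - T) * l2) * LV V T.
Proof.
  intros HT H1 H2 Hc1 Hc2 Hv1 Hv2. apply LV_le_of_RS_le; try lra.
  intros n m. rewrite !RS_sum_unif. destruct (unif_lo_hi n m) as [P0 [P1 [_ [_ P4]]]].
  pose proof (lo_hi n).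
  pose proof (RS_right_ind_lt V _ _ l1 c1 HV Hnn P0 P1 Hv1 Hc1).
  pose proof (RS_right_ind_lt V _ _ l2 c2 HV Hnn P0 P1 Hv2 Hc2).
  pose proof (exp_pos (- u * l1)).
  apply Rle_trans with (RS_right (fun z => ind_lt l1 z + exp (- u * l1) * ind_lt l2 z +
     exp (- (u - T) * l2) * kern T z) V (unif (lo n) (hi n) m) (S m)).
  - apply RS_right_mono; auto. intros k _. pose proof (P4 (S k)). apply kern_split_le; lra.
  - rewrite !RS_right_plus, !RS_right_scal. nra.
Qed.

Lemma LV_tail_le c p tau s : 0 < p -> 0 <= c -> 0 <= tau -> 0 < s ->
  (forall z, 0 < z < p -> V z <= c) -> (forall z, p <= z -> V z <= exp (tau * z)) ->
  LV V (tau + s) <= c + (tau + s) / s * exp (- s * p).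
Proof.
  intros Hp Hc Htau Hs Hbelow Habove. set (u := tau + s).
  assert (Hl0 : 0 <= l) by (pose proof (Hl 1 ltac:(lra)); pose proof (Hnn 1 ltac:(lra)); lra).
  apply (LV_le_of_RS_bound u _ (fun n => kern u (hi n) * l)
           (fun n m => u * exp (- s * p) * (hi n - lo n) / INR (S m))); [unfold u; lra | | |].
  - apply (cv_squeeze0 _ (l / u)). intros n. pose proof (kern_pos u (hi n)).
    assert (HN : 0 < INR (S n)) by (apply lt_0_INR; lia).
    pose proof (exp_neg_le_inv (u * INR (S n)) ltac:(unfold u; nra)).
    unfold kern, hi in *. replace (- u * INR (S n)) with (- (u * INR (S n))) in * by ring.
    replace (l / u / INR (S n)) with (l * / (u * INR (S n))) by (field; unfold u; lra).
    split; nra.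
  - intros n. apply cv_div_INR_S.
  - intros n m. rewrite RS_sum_unif. destruct (unif_lo_hi n m) as [P0 [P1 [P2 [P3 _]]]].
    pose proof (lo_hi n). assert (Hm : INR (S m) <> 0) by (apply not_0_INR; lia).
    pose proof (RS_right_tail_le V l c p tau s (unif (lo n) (hi n) m) (S m) ((hi n - lo n) / INR (S m))
                  HV Hnn Hl Hp Hc Htau Hs (unif_step_nonneg (lo n) (hi n) m ltac:(lra)) Hbelow Habove P0 P1
                  (unif_S _ _ _)) as HT.
    rewrite P3 in HT. fold u in HT.
    replace (u / s * (1 + s * ((hi n - lo n) / INR (S m))) * exp (- s * p))
      with (u / s * exp (- s * p) + u * exp (- s * p) * (hi n - lo n) / INR (S m)) in HT
      by (field; lra).
    lra.
Qed.

Lemma LV_ge_kern_mass t y : 0 <= t -> 0 < y -> kern t y * V y <= LV V t.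
Proof.
  intros Ht Hy. apply le_of_le_sub_eps. intros e He.
  destruct (HV0 e He) as [d [Hd Hd']].
  set (m := Rmin d y). assert (Hm : 0 < m /\ m <= d /\ m <= y) by (unfold m, Rmin; destruct Rle_dec; lra).
  destruct (INR_S_gt (Rmax y (/ m))) as [n Hn]. specialize (Hn n (le_n n)).
  pose proof (Rmax_l y (/ m)). pose proof (Rmax_r y (/ m)). pose proof (lo_hi n).
  assert (Hlo : lo n < m).
  { unfold lo. rewrite <- (Rinv_inv m). apply Rinv_lt_contravar; [|lra].
    apply Rmult_lt_0_compat; [apply Rinv_0_lt_compat|]; lra. }
  assert (Hhi : y <= hi n) by (unfold hi; lra).
  set (p := fun k => match k with O => lo n | S O => y | _ => hi n end).
  assert (Hp : increasing_upto p 2).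
  { intros [|[|i]] [|[|j]] Hij; simpl; lra || lia. }
  destruct (LV_trunc_spec V t n HV Ht) as [_ HI]. specialize (HI p 2%nat eq_refl eq_refl Hp).
  destruct (LV_spec t Ht) as [_ [HL _]]. specialize (HL n).
  unfold RS_right in HI. simpl in HI.
  specialize (Hd' (lo n) ltac:(lra)). pose proof (Hnn (lo n) ltac:(lra)).
  assert (V y <= V (hi n)) by (apply HV; lra).
  pose proof (kern_pos t (hi n)). pose proof (kern_le_1 t y Ht ltac:(lra)). pose proof (kern_pos t y).
  assert (0 <= kern t (hi n) * (V (hi n) - V y)) by (apply Rmult_le_pos; lra).
  nra.
Qed.

Lemma LV_gt_near_0 eps y t : 0 < y -> 0 < eps < V y ->
  0 <= t <= (V y - eps) / (2 * (y * V y)) -> eps < LV V t.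
Proof.
  intros Hy Heps Ht. pose proof (LV_ge_kern_mass t y ltac:(lra) Hy).
  pose proof (exp_ineq1_le (- t * y)).
  assert (t * (y * V y) <= (V y - eps) / 2).
  { destruct Ht as [_ Ht]. apply (Rmult_le_compat_r (y * V y)) in Ht; [|nra].
    replace ((V y - eps) / (2 * (y * V y)) * (y * V y)) with ((V y - eps) / 2) in Ht by (field; nra). lra. }
  unfold kern in *. nra.
Qed.

Lemma LV_vanishes e : 0 < e -> exists t, 0 <= t /\ LV V t <= e.
Proof.
  intros He. destruct (HV0 (e / 2) ltac:(lra)) as [d [Hd Hd']].
  destruct (LV_spec 0 (Rle_refl 0)) as [_ [_ HL0]].
  set (t := (e + 2 * l) / (e * d)).
  assert (Htd : t * d = (e + 2 * l) / e) by (unfold t; field; lra).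
  assert (Ht : 0 < t) by (unfold t; apply Rdiv_lt_0_compat; nra).
  exists t. split; [lra|].
  assert (Hsmall : forall z, 0 < z < d -> V z <= e / 2) by (intros z Hz; specialize (Hd' z Hz); lra).
  pose proof (LV_split_le t 0 d d (e / 2) (e / 2) ltac:(lra) ltac:(lra) ltac:(lra) ltac:(lra)
                ltac:(lra) Hsmall Hsmall) as HS.
  replace (- (t - 0) * d) with (- t * d) in HS by ring.
  pose proof (exp_neg_le_inv (t * d) ltac:(nra)).
  replace (- (t * d)) with (- t * d) in H by ring. rewrite Htd in H.
  replace (/ ((e + 2 * l) / e)) with (e / (e + 2 * l)) in H by (field; lra).
  assert (exp (- t * d) * (e / 2 + LV V 0) <= e / 2).
  { apply Rle_trans with (e / (e + 2 * l) * ((e + 2 * l) / 2)); [|right; field; lra].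
    pose proof (exp_pos (- t * d)). apply Rmult_le_compat; lra. }
  lra.
Qed.

Lemma LV_crossing eps : 0 < eps < LV V 0 ->
  exists T, 0 <= T /\ LV V T = eps /\ forall t, 0 <= t -> LV V t <= eps -> T <= t.
Proof.
  intros Heps. destruct (LV_spec 0 (Rle_refl 0)) as [_ [_ HL0]].
  destruct (Hsup eps ltac:(lra)) as [y [Hy Hvy]].
  set (d := (V y - eps) / (2 * (y * V y))).
  assert (Hd : 0 < d) by (unfold d; apply Rdiv_lt_0_compat; nra).
  apply (first_crossing (LV V) eps d (l / d)); auto.
  - apply Rmult_le_pos; [lra | left; apply Rinv_0_lt_compat; lra].
  - intros t Ht. apply (LV_gt_near_0 eps y); auto. lra.
  - apply LV_vanishes; lra.
  - intros t t' Htt. split; [apply LV_antitone; lra|].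
    pose proof (LV_lipschitz t t' ltac:(lra)).
    assert (/ t <= / d) by (apply Rinv_le_contravar; lra).
    assert (0 <= (t' - t) * l) by nra. unfold Rdiv in *. nra.
Qed.

(** * lambda_V, tau_V and T_V *)

Lemma lamV_spec c : 0 < c < l ->
  0 < lamV V c /\ (forall z, 0 < z < lamV V c -> V z <= c) /\ (forall z, lamV V c <= z -> c <= V z).
Proof.
  intros Hc.
  assert (Hi : is_inf (fun x => 0 < x /\ c < V x) (lamV V c)).
  { apply Inf_spec; [apply Hsup; lra | exists 0; intros x [Hx _]; lra]. }
  set (lam := lamV V c) in *.
  assert (Hpos : 0 < lam).
  { destruct (HV0 c ltac:(lra)) as [d [Hd Hd']]. apply Rlt_le_trans with d; auto.
    apply (proj2 Hi). intros x [Hx1 Hx2]. destruct (Rlt_dec x d); [|lra].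
    specialize (Hd' x ltac:(lra)). lra. }
  assert (Hbelow : forall z, 0 < z < lam -> V z <= c).
  { intros z Hz. destruct (Rle_dec (V z) c); auto.
    assert (lam <= z) by (apply (proj1 Hi); split; lra). lra. }
  assert (Hat : c <= V lam).
  { destruct (Rle_dec c (V lam)); auto. exfalso.
    destruct (Hrc lam Hpos (c - V lam) ltac:(lra)) as [d [Hd Hd']].
    destruct (is_inf_approx _ _ d Hi Hd) as [x [[Hx1 Hx2] Hx3]].
    assert (lam <= x) by (apply (proj1 Hi); split; auto).
    specialize (Hd' x ltac:(lra)). lra. }
  repeat split; auto. intros z Hz. assert (V lam <= V z) by (apply HV; lra). lra.
Qed.

Lemma tauV_spec c : 0 < c < l ->
  0 < tauV V c /\ (forall z, lamV V c <= z -> V z <= exp (tauV V c * z)) /\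
  (forall e, 0 < e -> exists x, lamV V c <= x /\ 0 < x /\ tauV V c - e < ln (1 + V x) / x).
Proof.
  intros Hc. destruct (lamV_spec c Hc) as [Hlam [_ Hge]].
  set (lam := lamV V c) in *.
  set (F := fun y => exists x, lam <= x /\ 0 < x /\ y = ln (1 + V x) / x).
  assert (Hs : is_sup F (tauV V c)).
  { apply Sup_spec; [exists (ln (1 + V lam) / lam), lam; repeat split; auto; lra|].
    exists (ln (1 + l) / lam). intros y [x [H1 [H2 ->]]].
    pose proof (Hnn x H2). pose proof (Hl x H2).
    assert (ln (1 + V x) <= ln (1 + l)) by (apply ln_le; lra).
    assert (0 <= ln (1 + V x)) by (rewrite <- ln_1; apply ln_le; lra).
    unfold Rdiv. apply Rle_trans with (ln (1 + l) * / x).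
    - apply Rmult_le_compat_r; [left; apply Rinv_0_lt_compat|]; lra.
    - apply Rmult_le_compat_l; [lra | apply Rinv_le_contravar; lra]. }
  set (tau := tauV V c) in *.
  split; [|split].
  - apply Rlt_le_trans with (ln (1 + V lam) / lam).
    + pose proof (Hge lam (Rle_refl _)).
      assert (0 < ln (1 + V lam)) by (rewrite <- ln_1; apply ln_increasing; lra).
      apply Rdiv_lt_0_compat; lra.
    + apply (proj1 Hs). exists lam; repeat split; auto; lra.
  - intros z Hz. assert (Hr : ln (1 + V z) / z <= tau) by (apply (proj1 Hs); exists z; repeat split; auto; lra).
    pose proof (Hnn z ltac:(lra)).
    assert (ln (1 + V z) <= tau * z).
    { apply (Rmult_le_compat_r z) in Hr; [|lra].
      replace (ln (1 + V z) / z * z) with (ln (1 + V z)) in Hr by (field; lra). lra. }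
    apply exp_le in H0. rewrite exp_ln in H0 by lra. lra.
  - intros e He. destruct (is_sup_approx F tau e Hs He) as [y [[x [H1 [H2 ->]]] H3]]. eauto.
Qed.

Lemma LV_tauV_ge c : 0 < c < l -> c / (1 + c) <= LV V (tauV V c).
Proof.
  intros Hc. destruct (tauV_spec c Hc) as [Htau [_ Happ]]. destruct (lamV_spec c Hc) as [Hlam [_ Hge]].
  set (tau := tauV V c) in *. set (K := c / (1 + c)). set (X0 := 2 * ln (1 + l) / tau).
  assert (HK : 0 < K) by (unfold K; apply Rdiv_lt_0_compat; lra).
  assert (HX0 : 0 <= X0).
  { unfold X0. apply Rmult_le_pos; [|left; apply Rinv_0_lt_compat; lra].
    assert (0 <= ln (1 + l)) by (rewrite <- ln_1; apply ln_le; lra). lra. }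
  apply le_of_le_sub_eps. intros e He.
  set (h := Rmin (tau / 2) (e / (K * X0 + 1))).
  assert (Hh : 0 < h /\ h <= tau / 2 /\ h <= e / (K * X0 + 1)).
  { unfold h, Rmin. assert (0 < e / (K * X0 + 1)) by (apply Rdiv_lt_0_compat; nra).
    destruct Rle_dec; lra. }
  destruct (Happ h ltac:(lra)) as [x [Hx1 [Hx2 Hx3]]].
  pose proof (LV_ge_kern_mass tau x ltac:(lra) Hx2).
  pose proof (Hge x Hx1). pose proof (Hl x Hx2).
  assert (Hln : (tau - h) * x < ln (1 + V x)).
  { apply (Rmult_lt_compat_r x) in Hx3; auto.
    replace (ln (1 + V x) / x * x) with (ln (1 + V x)) in Hx3 by (field; lra). lra. }
  assert (HxX0 : x <= X0).
  { assert (ln (1 + V x) <= ln (1 + l)) by (apply ln_le; lra).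
    unfold X0. apply (Rmult_le_reg_r tau); auto.
    replace (2 * ln (1 + l) / tau * tau) with (2 * ln (1 + l)) by (field; lra). nra. }
  pose proof (kern_mass_ge tau h x (V x) c Hx2 ltac:(lra) ltac:(lra)).
  pose proof (exp_ineq1_le (- h * x)).
  assert (K * h * X0 <= e).
  { assert (0 < e / (K * X0 + 1)) by (apply Rdiv_lt_0_compat; nra).
    assert (e / (K * X0 + 1) * (K * X0) = e - e / (K * X0 + 1)) by (field; nra).
    replace (K * h * X0) with (h * (K * X0)) by ring.
    apply Rle_trans with (e / (K * X0 + 1) * (K * X0)); [apply Rmult_le_compat_r; nra | lra]. }
  assert (K * h * x <= K * h * X0) by (apply Rmult_le_compat_l; nra).
  assert (K * (1 + - h * x) <= K * exp (- h * x)) by (apply Rmult_le_compat_l; lra).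
  fold K in H2. lra.
Qed.

Lemma LV_tauV_shift_le c s : 0 < c < l -> 0 < s ->
  LV V (tauV V c + s) <= c + (tauV V c + s) / (s * exp (s * lamV V c)).
Proof.
  intros Hc Hs. destruct (lamV_spec c Hc) as [Hlam [Hbelow _]]. destruct (tauV_spec c Hc) as [Htau [Habove _]].
  replace ((tauV V c + s) / (s * exp (s * lamV V c))) with ((tauV V c + s) / s * exp (- s * lamV V c)).
  - apply LV_tail_le; auto; lra.
  - replace (- s * lamV V c) with (- (s * lamV V c)) by ring. rewrite exp_Ropp.
    pose proof (exp_pos (s * lamV V c)). field. lra.
Qed.

Lemma TV_spec eps : 0 < eps < LV V 0 -> 0 <= TV V eps /\ LV V (TV V eps) = eps.
Proof.
  intros Heps. destruct (LV_crossing eps Heps) as [T [HT0 [HTe HTmin]]].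
  assert (Hspec : 0 <= TV V eps /\ LV V (TV V eps) <= eps /\
     forall t, 0 <= t -> LV V t <= eps -> TV V eps <= t).
  { apply (epsilon_spec (inhabits 0) (fun t => 0 <= t /\ LV V t <= eps /\
       forall t', 0 <= t' -> LV V t' <= eps -> t <= t')).
    exists T. repeat split; auto; lra. }
  destruct Hspec as [H0 [H1 H2]].
  assert (TV V eps = T) as -> by (apply Rle_antisym; [apply H2; lra | apply HTmin; auto]).
  auto.
Qed.

Lemma LV_TV_shift_le eps c1 c2 r s : 0 < eps < LV V 0 -> 0 < c1 < l -> 0 < c2 < l ->
  0 <= r -> 0 < s ->
  LV V (TV V eps + r + s) <=
  c1 + c2 * exp (- (TV V eps + r + s) * lamV V c1)
  + eps * (TV V eps + r + s) / ((TV V eps + s) * exp (r * lamV V c2)).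
Proof.
  intros Heps Hc1 Hc2 Hr Hs. destruct (TV_spec eps Heps) as [HT HTe].
  destruct (lamV_spec c1 Hc1) as [Hlam1 [Hbelow1 _]]. destruct (lamV_spec c2 Hc2) as [Hlam2 [Hbelow2 _]].
  set (T := TV V eps) in *. set (u := T + r + s). set (l2 := lamV V c2) in *.
  pose proof (LV_split_le u T (lamV V c1) l2 c1 c2 ltac:(unfold u; lra) ltac:(lra) ltac:(lra)
                ltac:(lra) ltac:(lra) Hbelow1 Hbelow2) as HS.
  rewrite HTe in HS.
  assert (exp (- (u - T) * l2) * eps <= eps * u / ((T + s) * exp (r * l2))); [|nra].
  assert (exp (- (u - T) * l2) <= / exp (r * l2)).
  { rewrite <- exp_Ropp. apply exp_le. unfold u. nra. }
  assert (1 <= u / (T + s)).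
  { apply (Rmult_le_reg_r (T + s)); [lra|]. replace (u / (T + s) * (T + s)) with u by (field; lra).
    unfold u; lra. }
  pose proof (exp_pos (r * l2)).
  replace (eps * u / ((T + s) * exp (r * l2))) with (eps * / exp (r * l2) * (u / (T + s))) by (field; lra).
  assert (0 < / exp (r * l2)) by (apply Rinv_0_lt_compat; lra).
  apply Rle_trans with (eps * / exp (r * l2)); [nra|].
  rewrite <- (Rmult_1_r (eps * / exp (r * l2))) at 1. apply Rmult_le_compat_l; nra.
Qed.

End LaplaceStieltjes.

Lemma in_classV_spec V : in_classV V -> exists l,
  increasing_pos V /\ nonneg_pos V /\ (forall z, 0 < z -> V z <= l) /\
  (forall e, 0 < e -> exists d, 0 < d /\ forall y, 0 < y < d -> V y < e) /\
  (forall x, 0 < x -> forall e, 0 < e -> exists d, 0 < d /\ forall y, x <= y < x + d -> V y < V x + e) /\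
  (forall c, c < l -> exists y, 0 < y /\ c < V y).
Proof.
  intros [HV [Hrc [H0 [l Hl]]]]. exists l.
  assert (Hnn : nonneg_pos V).
  { intros z Hz. destruct (Rle_dec 0 (V z)) as [|Hn]; auto. exfalso.
    destruct (H0 (- V z) ltac:(lra)) as [d [Hd Hd']].
    set (y := Rmin z (d / 2)). assert (0 < y < d /\ y <= z) by (unfold y, Rmin; destruct Rle_dec; lra).
    specialize (Hd' y ltac:(lra)). assert (V y <= V z) by (apply HV; lra).
    rewrite Rabs_left in Hd' by lra. lra. }
  repeat split; auto.
  - intros z Hz. destruct (Rle_dec (V z) l) as [|Hn]; auto. exfalso.
    destruct (Hl (V z - l) ltac:(lra)) as [M HM].
    set (y := Rmax M z + 1). pose proof (Rmax_l M z). pose proof (Rmax_r M z).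
    specialize (HM y ltac:(unfold y; lra)). assert (V z <= V y) by (apply HV; unfold y; lra).
    rewrite Rabs_pos_eq in HM by lra. lra.
  - intros e He. destruct (H0 e He) as [d [Hd Hd']]. exists d. split; auto.
    intros y Hy. specialize (Hd' y Hy). apply Rabs_def2 in Hd'. lra.
  - intros x Hx e He. destruct (Hrc x Hx e He) as [d [Hd Hd']]. exists d. split; auto.
    intros y Hy. specialize (Hd' y Hy). apply Rabs_def2 in Hd'. lra.
  - intros c Hc. destruct (Hl (l - c) ltac:(lra)) as [M HM].
    set (y := Rmax M 0 + 1). pose proof (Rmax_l M 0). pose proof (Rmax_r M 0).
    exists y. split; [unfold y; lra|].
    specialize (HM y ltac:(unfold y; lra)). apply Rabs_def2 in HM. lra.
Qed.

Theorem lemma2p5 (V : R -> R) (eps c c1 c2 : R) :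
  in_classV V ->
  0 < eps < LV V 0 -> 0 < c < LV V 0 -> 0 < c1 < LV V 0 -> 0 < c2 < LV V 0 ->
  (LV V (tauV V c) >= c / (1 + c) /\
   forall s, 0 < s ->
     LV V (tauV V c + s) <= c + (tauV V c + s) / (s * exp (s * lamV V c))) /\
  (LV V (TV V eps) = eps /\
   forall r s, 0 <= r -> 0 < s -> c1 < c2 ->
     LV V (TV V eps + r + s) <=
       c1 + c2 * exp (- (TV V eps + r + s) * lamV V c1)
       + eps * (TV V eps + r + s) / ((TV V eps + s) * exp (r * lamV V c2))).
Proof.
  intros HVcl Heps Hc Hc1 Hc2.
  destruct (in_classV_spec V HVcl) as [l [HV [Hnn [Hl [HV0 [Hrc Hsup]]]]]].
  destruct (LV_spec V l HV Hnn Hl 0 (Rle_refl 0)) as [_ [_ HL0]].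
  split; split.
  - apply Rle_ge, (LV_tauV_ge V l); auto; lra.
  - intros s Hs. apply (LV_tauV_shift_le V l); auto; lra.
  - apply (TV_spec V l); auto.
  (* the bound does not need c1 < c2 *)
  - intros r s Hr Hs _. apply (LV_TV_shift_le V l); auto; lra.
Qed.
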